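(* Let $K$ be a field and $A$ a subring of $K$. Then the surjective map $\gamma:\mathrm{Zar}(K|A)\to\mathrm{Spec}(A)$, $V\mapsto M_V\cap A$, is continuous and closed when both $\mathrm{Zar}(K|A)$ and $\mathrm{Spec}(A)$ are endowed with their ultrafilter topologies.
   Context: $\mathrm{Zar}(K|A)$ denotes the set of all valuation rings of $K$ containing $A$; $M_V$ denotes the maximal ideal of $V$, and $M_V\cap A$ is the center of $V$ on $A$. A filter on a set $X$ is a nonempty collection of subsets of $X$ not containing $\emptyset$, closed under finite intersections and supersets; an ultrafilter is a maximal filter. Ultrafilter topology on $Z:=\mathrm{Zar}(K|A)$: for $x\in K$ let $B_x:=\{V\in Z\mid x\in V\}$; for $Y\subseteq Z$ nonempty and an ultrafilter $\mathscr U$ on $Y$ let $A_{\mathscr U,Y}:=\{x\in K\mid B_x\cap Y\in\mathscr U\}$ (a valuation domain in $Z$); the closed sets are the subsets $Y$ with $A_{\mathscr U,Y}\in Y$ for every ultrafilter $\mathscr U$ on $Y$. Ultrafilter topology on $X:=\mathrm{Spec}(A)$: for $a\in A$ let $V(a):=\{P\in X\mid a\in P\}$; for $C\subseteq X$ and an ultrafilter $\mathscr U$ on $C$, $P_{\mathscr U}:=\{a\in A\mid V(a)\cap C\in\mathscr U\}$ is a prime ideal of $A$ (an ultrafilter limit point of $C$); the closed sets are the subsets $C$ containing all their ultrafilter limit points. *)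

From HB Require Import structures.
From mathcomp Require Import all_boot all_order all_algebra.
From mathcomp Require Import boolp classical_sets.
Set Implicit Arguments. Unset Strict Implicit. Unset Printing Implicit Defensive.
Import GRing.Theory.
Local Open Scope ring_scope.
Local Open Scope classical_set_scope.

Definition is_subring (K : fieldType) (A : set K) : Prop :=
  A 0 /\ A 1 /\ (forall x y, A x -> A y -> A (x - y)) /\
  (forall x y, A x -> A y -> A (x * y)).

Definition is_valuation_ring (K : fieldType) (V : set K) : Prop :=
  is_subring V /\ (forall x : K, x != 0 -> V x \/ V x^-1).

Definition Zar (K : fieldType) (A : set K) : set (set K) :=
  [set V | is_valuation_ring V /\ A `<=` V].

(* M_V: the maximal ideal of the (local) ring V, i.e. its non-units. *)
Definition maxideal (K : fieldType) (V : set K) : set K :=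
  [set x | V x /\ ~ (exists y, V y /\ x * y = 1)].

Definition is_prime_ideal (K : fieldType) (A P : set K) : Prop :=
  P `<=` A /\ P 0 /\ (forall x y, P x -> P y -> P (x + y)) /\
  (forall a x, A a -> P x -> P (a * x)) /\ ~ P 1 /\
  (forall a b, A a -> A b -> P (a * b) -> P a \/ P b).

Definition Spec (K : fieldType) (A : set K) : set (set K) :=
  [set P | is_prime_ideal A P].

Definition center (K : fieldType) (A : set K) (V : set K) : set K :=
  maxideal V `&` A.

Definition is_filter_on (T : Type) (Y : set T) (F : set (set T)) : Prop :=
  (exists B, F B) /\ ~ F set0 /\ (forall B, F B -> B `<=` Y) /\
  (forall B C, F B -> F C -> F (B `&` C)) /\
  (forall B C, F B -> B `<=` C -> C `<=` Y -> F C).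

Definition is_ultrafilter_on (T : Type) (Y : set T) (U : set (set T)) : Prop :=
  is_filter_on Y U /\ (forall G, is_filter_on Y G -> U `<=` G -> G = U).

(* Ultrafilter topology on Zar(K|A). *)
Definition Bx (K : fieldType) (A : set K) (x : K) : set (set K) :=
  [set V | Zar A V /\ V x].

Definition zar_limit (K : fieldType) (A : set K) (U : set (set (set K)))
  (Y : set (set K)) : set K :=
  [set x | U (Bx A x `&` Y)].

Definition zar_ultra_closed (K : fieldType) (A : set K) (Y : set (set K)) : Prop :=
  Y `<=` Zar A /\
  (forall U, is_ultrafilter_on Y U -> Y (zar_limit A U Y)).

(* Ultrafilter topology on Spec(A). *)
Definition Vset (K : fieldType) (A : set K) (a : K) : set (set K) :=
  [set P | Spec A P /\ P a].

Definition spec_limit (K : fieldType) (A : set K) (U : set (set (set K)))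
  (C : set (set K)) : set K :=
  [set a | A a /\ U (Vset A a `&` C)].

Definition spec_ultra_closed (K : fieldType) (A : set K) (C : set (set K)) : Prop :=
  C `<=` Spec A /\
  (forall U, is_ultrafilter_on C U -> C (spec_limit A U C)).

From mathcomp Require Import all_boot all_order all_algebra.
From mathcomp Require Import boolp classical_sets ring.
Set Implicit Arguments. Unset Strict Implicit. Unset Printing Implicit Defensive.
Import GRing.Theory.
Local Open Scope ring_scope.
Local Open Scope classical_set_scope.

(* For a family Y of valuation rings and an ultrafilter U on Y, the limit
   A_U = {x | x lies in U-almost every V} is again a valuation ring, and an
   element a of A lies in its maximal ideal iff it lies in M_V for U-almost
   every V.  So the center of the limit is the limit of the pushforward of U
   along gamma.  Continuity follows by pushing ultrafilters forward; for
   closedness, an ultrafilter on gamma(Y) is pulled back to a filter on Y and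
   extended to an ultrafilter W there, whose pushforward is the given one. *)

Section Filters.
Variables (T : Type) (Y : set T).
Implicit Types (U G : set (set T)) (X Z B : set T).

Lemma filterY U : is_filter_on Y U -> U Y.
Proof. by move=> [[B UB] [_ [sub [_ sup]]]]; exact: (sup B Y UB (sub B UB)). Qed.

Lemma filterS U X Z : is_filter_on Y U -> U X -> X `<=` Z -> Z `<=` Y -> U Z.
Proof. by move=> [_ [_ [_ [_ sup]]]]; apply: sup. Qed.

Lemma filterI U X Z : is_filter_on Y U -> U X -> U Z -> U (X `&` Z).
Proof. by move=> [_ [_ [_ [I _]]]]; apply: I. Qed.

Lemma filter_sub U X : is_filter_on Y U -> U X -> X `<=` Y.
Proof. by move=> [_ [_ [sub _]]]; apply: sub. Qed.

Lemma filter_neq0 U X : is_filter_on Y U -> U X -> X !=set0.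
Proof. by move=> [_ [U0 _]] UX; apply: contra_notP U0 => /nonemptyPn <-. Qed.

Lemma filter_setD U B : is_filter_on Y U -> U B -> ~ U (Y `\` B).
Proof.
by move=> fU UB /(filterI fU UB) /(filter_neq0 fU) [x [? [_ ?]]].
Qed.

Lemma filter_adjoin U B : is_filter_on Y U -> B `<=` Y ->
    (forall X, U X -> X `&` B !=set0) ->
  let G := [set Z | Z `<=` Y /\ exists2 X, U X & X `&` B `<=` Z] in
  [/\ is_filter_on Y G, U `<=` G & G B].
Proof.
move=> fU sB meetB G; have UY := filterY fU.
have GB : G B by split=> //; exists Y => // x [].
split=> //; last by move=> X UX; split; [exact: filter_sub UX|exists X => // x []].
split; first by exists B.
split; first by move=> [_ [X /meetB [x Xx] /(_ x Xx)]].
split; first by move=> Z [].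
split.
  move=> Z1 Z2 [sZ1 [X1 UX1 h1]] [_ [X2 UX2 h2]].
  split; first by move=> x [/sZ1].
  by exists (X1 `&` X2); [exact: filterI|move=> x [[? ?] ?]; split; [apply: h1|apply: h2]].
move=> Z1 Z2 [_ [X UX h]] sZ12 sZ2; split=> //.
by exists X => // x /h /sZ12.
Qed.

Lemma ultra_setD U B : is_ultrafilter_on Y U -> B `<=` Y -> U B \/ U (Y `\` B).
Proof.
move=> [fU maxU] sB; have [|UB] := pselect (U (Y `\` B)); [by right|left].
have meetB X : U X -> X `&` B !=set0.
  move=> UX; apply: contra_notP UB => XB0.
  apply: (filterS fU UX) => [x Xx|x []//]; split; first exact: filter_sub fU UX _ Xx.
  by move=> Bx; apply: XB0; exists x.
have [fG sUG GB] := filter_adjoin fU sB meetB.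
by rewrite -(maxU _ fG sUG).
Qed.

Lemma ultra_setDE U B : is_ultrafilter_on Y U -> B `<=` Y -> ~ U B <-> U (Y `\` B).
Proof.
move=> uU sB; split; first by case: (ultra_setD uU sB).
by move=> UYB UB; exact: filter_setD (proj1 uU) UB UYB.
Qed.

Lemma ultra_dichotomy U : is_filter_on Y U ->
  (forall B, B `<=` Y -> U B \/ U (Y `\` B)) -> is_ultrafilter_on Y U.
Proof.
move=> fU dU; split=> // G fG sUG; apply/seteqP; split=> [B GB|]; last exact: sUG.
have [//|/sUG GYB] := dU B (filter_sub fG GB).
by case: (filter_setD fG GB GYB).
Qed.

Lemma filter_bigcup (Fam : set (set (set T))) :
    total_on Fam subset -> (forall G X, Fam G -> G X -> is_filter_on Y G) ->
    (exists2 G, Fam G & G !=set0) ->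
  is_filter_on Y (\bigcup_(G in Fam) G).
Proof.
move=> tot fFam [G0 FamG0 [X0 G0X0]].
split; first by exists X0, G0.
split; first by move=> [G FamG G_0]; case: (filter_neq0 (fFam _ _ FamG G_0) G_0).
split; first by move=> X [G FamG GX]; exact: filter_sub (fFam _ _ FamG GX) GX.
split.
  move=> X Z [G1 Fam1 G1X] [G2 Fam2 G2Z].
  have [s12|s21] := tot _ _ Fam1 Fam2.
    by exists G2 => //; apply: filterI (fFam _ _ Fam2 G2Z) _ G2Z; exact: s12.
  by exists G1 => //; apply: filterI (fFam _ _ Fam1 G1X) G1X _; exact: s21.
move=> X Z [G FamG GX] sXZ sZ; exists G => //.
exact: filterS (fFam _ _ FamG GX) GX sXZ sZ.
Qed.

(* [set0] is admitted as a candidate so that the union of the empty chain qualifies. *)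
Lemma ultra_extend F : is_filter_on Y F ->
  exists2 W, is_ultrafilter_on Y W & F `<=` W.
Proof.
move=> fF; pose P := [set G | G = set0 \/ is_filter_on Y G /\ F `<=` G].
have filterP G X : P G -> G X -> is_filter_on Y G.
  by case=> [->//|[]].
have [W [PW maxW]] : exists W, P W /\ forall G, W `<` G -> ~ P G.
  apply: Zorn_bigcup => Fam sFamP tot.
  have [[G0 FamG0 G0n]|Fam0] := pselect (exists2 G, Fam G & G !=set0).
    right; split.
      by apply: filter_bigcup => // [G X /sFamP|]; [exact: filterP|exists G0].
    have [_ sFG0] : is_filter_on Y G0 /\ F `<=` G0.
      by case: (sFamP _ FamG0) => // G00; case: G0n => X; rewrite G00.
    by move=> X FX; exists G0 => //; exact: sFG0.
  left; apply/seteqP; split=> // X [G FamG GX].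
  by apply: Fam0; exists G => //; exists X.
have [fW sFW] : is_filter_on Y W /\ F `<=` W.
  case: PW => // W0; have [B FB] := proj1 fF.
  exfalso; apply: (maxW F); [|by right; split].
  by rewrite W0; split=> [X //|/(_ B FB)].
exists W => //; split=> // G fG sWG.
have [//|GW] := pselect (G = W); exfalso; apply: (maxW G).
  by split=> // sGW; apply: GW; apply/seteqP; split.
by right; split=> //; exact: subset_trans sFW sWG.
Qed.

End Filters.

Section FilterImage.
Variables (T S : Type) (f : T -> S) (Y : set T).

Definition pushforward (C : set S) (U : set (set T)) : set (set S) :=
  [set D | D `<=` C /\ U (Y `&` f @^-1` D)].

Definition pullback (U : set (set S)) : set (set T) :=
  [set Z | Z `<=` Y /\ exists2 D, U D & Y `&` f @^-1` D `<=` Z].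

Variables (C : set S) (U : set (set T)).
Hypothesis fYC : f @` Y `<=` C.

Lemma pushforward_filter : is_filter_on Y U -> is_filter_on C (pushforward C U).
Proof.
move=> fU; have sub D : Y `&` f @^-1` D `<=` Y by move=> x [].
split.
  exists C; split=> //; apply: (filterS fU (filterY fU)) => // x Yx.
  by split=> //; apply: fYC; exists x.
split; first by move=> [_ /(filter_neq0 fU) [x [_ []]]].
split; first by move=> D [].
split.
  move=> D1 D2 [sD1 U1] [_ U2]; split; first by move=> y [/sD1].
  by apply: (filterS fU (filterI fU U1 U2)) => // x [[Yx ?] [_ ?]].
move=> D1 D2 [_ U1] sD12 sD2; split=> //.
by apply: (filterS fU U1) => // x [Yx /sD12].
Qed.

Lemma pushforward_ultra : is_ultrafilter_on Y U -> is_ultrafilter_on C (pushforward C U).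
Proof.
move=> uU; apply: ultra_dichotomy => [|D sD]; first exact: pushforward_filter (proj1 uU).
have sub : Y `&` f @^-1` D `<=` Y by move=> x [].
have [UD|UYD] := ultra_setD uU sub; [by left|right; split=> [y []//|]].
apply: (filterS (proj1 uU) UYD) => [x [Yx nD]|x []//].
by split=> //; split=> [|Dfx]; [apply: fYC; exists x|apply: nD].
Qed.

End FilterImage.

Lemma pullback_filter (T S : Type) (f : T -> S) (Y : set T) (U : set (set S)) :
  is_filter_on (f @` Y) U -> is_filter_on Y (pullback f Y U).
Proof.
move=> fU; split.
  by exists Y; split=> //; exists (f @` Y); [exact: filterY|move=> x []].
split.
  move=> [_ [D UD sD]]; have [y Dy] := filter_neq0 fU UD.
  have [x Yx fxy] := filter_sub fU UD Dy.
  by apply: (sD x); split=> //; rewrite /preimage /= fxy.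
split; first by move=> Z [].
split.
  move=> Z1 Z2 [sZ1 [D1 U1 h1]] [_ [D2 U2 h2]]; split; first by move=> x [/sZ1].
  exists (D1 `&` D2); first exact: filterI fU U1 U2.
  by move=> x [Yx [? ?]]; split; [apply: h1|apply: h2].
move=> Z1 Z2 [_ [D UD h]] sZ12 sZ2; split=> //.
by exists D => // x /h /sZ12.
Qed.

Section Subring.
Variables (K : fieldType) (V : set K).
Hypothesis sV : is_subring V.

Lemma subring0 : V 0. Proof. by case: sV. Qed.
Lemma subring1 : V 1. Proof. by case: sV => _ []. Qed.
Lemma subringB x y : V x -> V y -> V (x - y). Proof. by case: sV => _ [_ [Bcl _]]; apply: Bcl. Qed.
Lemma subringM x y : V x -> V y -> V (x * y). Proof. by case: sV => _ [_ [_ Mcl]]; apply: Mcl. Qed.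

Lemma subringD x y : V x -> V y -> V (x + y).
Proof.
by move=> Vx Vy; rewrite -[y]opprK -[- y]sub0r; apply: subringB (subringB subring0 Vy).
Qed.

End Subring.

Lemma maxidealE (K : fieldType) (V : set K) x :
  maxideal V x <-> V x /\ (x = 0 \/ ~ V x^-1).
Proof.
rewrite /maxideal /=; split=> [[Vx nunit]|[Vx Vxi]]; split=> //.
  have [->|x0] := eqVneq x 0; [by left|right=> Vxi].
  by apply: nunit; exists x^-1; rewrite mulfV.
move=> [y [Vy xy1]]; have x0 : x != 0.
  by apply/eqP => x0; move: xy1; rewrite x0 mul0r => /esym/eqP; rewrite oner_eq0.
case: Vxi => [/eqP|]; first by rewrite (negbTE x0).
by rewrite (mulfI x0 (_ : x * x^-1 = x * y)) // mulfV.
Qed.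

Section ValuationRing.
Variables (K : fieldType) (V : set K).
Hypothesis vV : is_valuation_ring V.
Let sV := proj1 vV.

Lemma maxidealE_neq0 x : x != 0 -> maxideal V x <-> V x /\ ~ V x^-1.
Proof.
move=> x0; rewrite maxidealE.
by split=> [[Vx [x00|//]]|[Vx nVxi]]; [rewrite x00 eqxx in x0|split=> //; right].
Qed.

Lemma maxideal0 : maxideal V 0.
Proof. by apply/maxidealE; split; [exact: subring0|left]. Qed.

Lemma maxideal1 : ~ maxideal V 1.
Proof. by move=> [_]; apply; exists 1; rewrite mulr1; split=> //; exact: subring1. Qed.

Lemma maxidealMl a x : V a -> maxideal V x -> maxideal V (a * x).
Proof.
move=> Va Mx; have [->|ax0] := eqVneq (a * x) 0; first exact: maxideal0.
have [a0 x0] : a != 0 /\ x != 0 by apply/andP; rewrite -negb_or -mulf_eq0.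
have [Vx nVxi] := (maxidealE_neq0 x0).1 Mx.
apply/(maxidealE_neq0 ax0); split=> [|Vaxi]; first exact: (subringM sV Va Vx).
apply: nVxi; have -> : x^-1 = a * (a * x)^-1 by rewrite invfM mulrA mulfV // mul1r.
exact: (subringM sV Va Vaxi).
Qed.

Lemma maxidealD x y : maxideal V x -> maxideal V y -> maxideal V (x + y).
Proof.
move=> Mx My; have [->|x0] := eqVneq x 0; first by rewrite add0r.
have [->|y0] := eqVneq y 0; first by rewrite addr0.
have [->|xy0] := eqVneq (x + y) 0; first exact: maxideal0.
(* [v^-1 = (u / v + 1) / (u + v)], so [u / v] and [(u + v)^-1] cannot both lie in V. *)
have noninv u v : v != 0 -> u + v != 0 -> maxideal V v -> V (u / v) -> ~ V (u + v)^-1.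
  move=> v0 uv0 Mv Vuv Vi; apply: ((maxidealE_neq0 v0).1 Mv).2.
  have -> : v^-1 = (u / v + 1) * (u + v)^-1 by field; rewrite uv0 v0.
  exact: (subringM sV (subringD sV Vuv (subring1 sV)) Vi).
apply/(maxidealE_neq0 xy0); split; first exact: (subringD sV (proj1 Mx) (proj1 My)).
have xy0' : x / y != 0 by rewrite mulf_neq0 ?invr_eq0.
have [Vxy|Vyx] := proj2 vV _ xy0'; first exact: noninv.
rewrite invf_div in Vyx; rewrite addrC; apply: noninv => //; by rewrite addrC.
Qed.

Lemma maxideal_prime a b : V a -> V b ->
  maxideal V (a * b) -> maxideal V a \/ maxideal V b.
Proof.
have unit u : V u -> ~ maxideal V u -> u != 0 /\ V u^-1.
  move=> Vu Mu; have u0 : u != 0 by apply/eqP => u0; apply: Mu; rewrite u0; exact: maxideal0.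
  by split=> //; apply: contra_notP Mu => nVi; apply/(maxidealE_neq0 u0).
move=> Va Vb Mab; apply: contra_notP (proj2 Mab).
move=> /not_orP [/(unit _ Va) [a0 Vai] /(unit _ Vb) [b0 Vbi]].
by exists (a^-1 * b^-1); split; [exact: subringM|rewrite mulrACA !mulfV ?mulr1].
Qed.

End ValuationRing.

Lemma center_prime (K : fieldType) (A V : set K) :
  is_subring A -> Zar A V -> Spec A (center A V).
Proof.
move=> sA [vV AV]; split; first by move=> x [].
split; first by split; [exact: maxideal0|exact: subring0].
split; first by move=> x y [Mx Ax] [My Ay]; split; [exact: maxidealD|exact: subringD].
split.
  move=> a x Aa [Mx Ax]; split; last exact: subringM.
  by apply: maxidealMl => //; exact: AV.
split; first by move=> [/(maxideal1 vV)].
move=> a b Aa Ab [/(maxideal_prime vV (AV _ Aa) (AV _ Ab)) Mab _].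
by case: Mab => ?; [left|right]; split.
Qed.

Section ZarLimit.
Variables (K : fieldType) (A : set K) (Y : set (set K)) (U : set (set (set K))).
Hypotheses (sYZ : Y `<=` Zar A) (uU : is_ultrafilter_on Y U).
Let fU := proj1 uU.
Let L := zar_limit A U Y.

Lemma zar_limit_all x : (forall V, Y V -> V x) -> L x.
Proof.
move=> Yx; apply: (filterS fU (filterY fU)) => [V YV|V []//].
by split=> //; split; [exact: sYZ|exact: Yx].
Qed.

Lemma zar_limit_closed (op : K -> K -> K) :
    (forall V x y, Zar A V -> V x -> V y -> V (op x y)) ->
  forall x y, L x -> L y -> L (op x y).
Proof.
move=> opV x y Lx Ly; apply: (filterS fU (filterI fU Lx Ly)) => [V|V []//].
by move=> [[[ZV Vx] YV] [[_ Vy] _]]; split=> //; split=> //; exact: opV.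
Qed.

Lemma zar_limit_Zar : Zar A L.
Proof.
have subrV V : Zar A V -> is_subring V by case=> [[]].
split; last by move=> a Aa; apply: zar_limit_all => V /sYZ [_]; apply.
split.
  split; first by apply: zar_limit_all => V /sYZ /subrV sV; exact: (subring0 sV).
  split; first by apply: zar_limit_all => V /sYZ /subrV sV; exact: (subring1 sV).
  split; apply: zar_limit_closed => V x y /subrV sV; [exact: subringB|exact: subringM].
move=> x x0; have sB : Bx A x `&` Y `<=` Y by move=> V [].
have [Lx|UnB] := ultra_setD uU sB; [by left|right].
apply: (filterS fU UnB) => [V [YV nB]|V []//].
have [[_ vV] _] := sYZ YV; split=> //; split; first exact: sYZ.
by case: (vV x x0) => // Vx; case: nB; split=> //; split=> //; exact: sYZ.
Qed.

Lemma maxideal_zar_limit a : A a ->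
  maxideal L a <-> U [set V | Y V /\ maxideal V a].
Proof.
move=> Aa; have sM : [set V | Y V /\ maxideal V a] `<=` Y by move=> V [].
rewrite maxidealE; split.
  move=> [_ [a0|nLa]].
    apply: (filterS fU (filterY fU)) => // V YV; split=> //; rewrite a0.
    by have [vV _] := sYZ YV; exact: maxideal0.
  have sB : Bx A a^-1 `&` Y `<=` Y by move=> V [].
  apply: (filterS fU ((ultra_setDE uU sB).1 nLa)) => // V [YV nB]; split=> //.
  apply/maxidealE; split; first by have [_ AV] := sYZ YV; exact: AV.
  by right=> Vai; apply: nB; split=> //; split=> //; exact: sYZ.
move=> UM; split; first by apply: zar_limit_all => V /sYZ [_]; apply.
have [->|a0] := eqVneq a 0; [by left|right=> Lai].
have [V [[[_ Vai] _] [_ /maxidealE [_ [a00|//]]]]] := filter_neq0 fU (filterI fU Lai UM).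
by rewrite a00 eqxx in a0.
Qed.

End ZarLimit.

Section CenterMap.
Variables (K : fieldType) (A : set K).
Hypothesis sA : is_subring A.

Lemma Vset_center a V : Zar A V -> A a -> Vset A a (center A V) <-> maxideal V a.
Proof.
by move=> ZV Aa; split=> [[_ []]|Ma] //; split; [exact: center_prime|split].
Qed.

Lemma center_zar_limit (Y : set (set K)) U C :
    Y `<=` Zar A -> is_ultrafilter_on Y U -> center A @` Y `<=` C ->
  spec_limit A (pushforward (center A) Y C U) C = center A (zar_limit A U Y).
Proof.
move=> sYZ uU sYC; have fU := proj1 uU.
apply/seteqP; split=> a.
  move=> [Aa [_ UaC]]; split=> //; apply/(maxideal_zar_limit sYZ uU Aa).
  apply: (filterS fU UaC) => [V [YV [/Vset_center Ma _]]|V []//].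
  by split=> //; apply: Ma => //; exact: sYZ.
move=> [/(maxideal_zar_limit sYZ uU) UMa Aa]; split=> //; split; first by move=> P [].
apply: (filterS fU (UMa Aa)) => [V [YV Ma]|V []//]; split=> //; split.
  by apply/Vset_center => //; exact: sYZ.
by apply: sYC; exists V.
Qed.

Lemma center_preimage_closed C : spec_ultra_closed A C ->
  zar_ultra_closed A [set V | Zar A V /\ C (center A V)].
Proof.
move=> [_ closedC]; split=> [V []//|U uU].
have sYZ : [set V | Zar A V /\ C (center A V)] `<=` Zar A by move=> V [].
have sYC : center A @` [set V | Zar A V /\ C (center A V)] `<=` C by move=> _ [V [_ CV] <-].
have := closedC _ (pushforward_ultra sYC uU); rewrite center_zar_limit //.
by split=> //; exact: zar_limit_Zar.
Qed.

Lemma center_image_closed Y : zar_ultra_closed A Y -> spec_ultra_closed A (center A @` Y).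
Proof.
move=> [sYZ closedY]; split=> [_ [V YV <-]|U uU]; first exact/center_prime/sYZ.
have [W uW sFW] := ultra_extend (pullback_filter (proj1 uU)).
have <- : pushforward (center A) Y (center A @` Y) W = U.
  apply: (proj2 uU); first exact: (pushforward_filter _ (proj1 uW)).
  move=> D UD; split; first exact: filter_sub (proj1 uU) UD.
  by apply: sFW; split=> [V []//|]; exists D.
rewrite center_zar_limit //; exists (zar_limit A W Y) => //; exact: closedY.
Qed.

End CenterMap.

Theorem theorem3p9 (K : fieldType) (A : set K) (hA : is_subring A) :
  (* gamma maps Zar(K|A) into Spec(A) *)
  (forall V, Zar A V -> Spec A (center A V)) /\
  (* continuity: preimages of closed sets are closed *)
  (forall C, spec_ultra_closed A C ->
     zar_ultra_closed A [set V | Zar A V /\ C (center A V)]) /\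
  (* closedness: images of closed sets are closed *)
  (forall Y, zar_ultra_closed A Y -> spec_ultra_closed A (center A @` Y)).
Proof.
split; first by move=> V; exact: center_prime.
by split; [exact: center_preimage_closed|exact: center_image_closed].
Qed.
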